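(* For every $n > 3$, the set $\{d_n\}$ is not equidistributed.
   Context: A linear arrangement of $\{1,\ldots,n\}$ is a sequence $a_1\cdots a_n$ in which each of $1,\ldots,n$ appears exactly once. It contains the pattern $ij$ if $a_t=i$ and $a_{t+1}=j$ for some $t$; otherwise it avoids it. $\{d_n\}$ is the set of linear arrangements of $\{1,\ldots,n\}$ avoiding all of the patterns $12, 23, \ldots, (n-1)n$. For a set $X$ of linear arrangements of $\{1,\ldots,n\}$ and $i\in\{1,\ldots,n\}$, the class $X^{(i)}$ is the set of arrangements in $X$ whose first entry is $i$. $X$ is called equidistributed if it is partitioned into its nonempty classes and all nonempty classes $X^{(i)}$ have the same cardinality. *)

(* Linear arrangements of {1,...,n} are represented as
   sequences of naturals that are permutations of [:: 1; 2; ...; n]. *)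
From mathcomp Require Import all_boot.
Set Implicit Arguments. Unset Strict Implicit. Unset Printing Implicit Defensive.

Definition arrangement (n : nat) (s : seq nat) : bool := perm_eq s (iota 1 n).

Definition contains_pat (s : seq nat) (i j : nat) : bool :=
  has (fun t => (nth 0 s t == i) && (nth 0 s t.+1 == j)) (iota 0 (size s).-1).

Definition avoids_succ (n : nat) (s : seq nat) : bool :=
  all (fun i => ~~ contains_pat s i i.+1) (iota 1 n.-1).

(* The set {d_n}, as a duplicate-free list of all such arrangements. *)
Definition dset (n : nat) : seq (seq nat) :=
  [seq s <- permutations (iota 1 n) | avoids_succ n s].

Definition cls (X : seq (seq nat)) (i : nat) : seq (seq nat) :=
  [seq s <- X | head 0 s == i].

Definition equidistributed (n : nat) (X : seq (seq nat)) : Prop :=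
  forall i j, 1 <= i <= n -> 1 <= j <= n ->
    size (cls X i) != 0 -> size (cls X j) != 0 ->
    size (cls X i) = size (cls X j).

(* The classes d_n^(1) and d_n^(n) have different sizes.  Relabelling by the
   cyclic permutation 1 -> n, i -> i - 1 maps an arrangement 1 a_2 ... a_n of
   d_n^(1) injectively to n (a_2 - 1) ... (a_n - 1), which is again in {d_n}:
   the only new adjacent pair is (n, a_2 - 1), and a_2 <= n.  The image never
   has 1 in second position, since a_2 = 2 is forbidden; but for n > 3 the
   arrangement n 1 (n-1) (n-2) ... 2 lies in d_n^(n).  Hence
   |d_n^(1)| < |d_n^(n)|, while d_n^(1) contains 1 n (n-1) ... 2. *)

From mathcomp Require Import all_boot zify.

Set Implicit Arguments.
Unset Strict Implicit.
Unset Printing Implicit Defensive.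

Definition succ_free (s : seq nat) : bool := sorted (fun a b => b != a.+1) s.

Lemma iotaS m k : iota m.+1 k = map succn (iota m k).
Proof. by rewrite -add1n iotaDl. Qed.

Lemma contains_pat_cons a b t i j :
  contains_pat [:: a, b & t] i j = (a == i) && (b == j) || contains_pat (b :: t) i j.
Proof. by rewrite /contains_pat /= iotaS has_map. Qed.

Lemma avoids_succ_cons n a b t :
  avoids_succ n [:: a, b & t] =
  all (fun i => (a != i) || (b != i.+1)) (iota 1 n.-1) && avoids_succ n (b :: t).
Proof.
rewrite /avoids_succ -all_predI; apply: eq_all => i /=.
by rewrite contains_pat_cons negb_or negb_and.
Qed.

Lemma avoids_succE n s : all (mem (iota 1 n)) s -> avoids_succ n s = succ_free s.
Proof.
elim: s => [|a [|b t] IH] /=; try by move=> _; apply/allP.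
rewrite !mem_iota => /and3P[an bn tn].
rewrite avoids_succ_cons IH /= ?mem_iota ?bn //; congr andb.
apply/allP/idP => [noab | neq i _].
  have [an' | na] := ltnP a n; last by apply/eqP; lia.
  by have := noab a; rewrite mem_iota eqxx /=; apply; lia.
by case: (a =P i) => //= <-.
Qed.

Lemma cls_head X i s : s \in cls X i -> head 0 s = i.
Proof. by rewrite mem_filter => /andP[/eqP]. Qed.

Lemma mem_cls_dset n i s :
  (s \in cls (dset n) i) = [&& head 0 s == i, perm_eq s (iota 1 n) & succ_free s].
Proof.
rewrite /cls /dset !mem_filter mem_permutations [avoids_succ _ _ && _]andbC.
congr andb; case sP: (perm_eq s _); last by [].
by rewrite avoids_succE // (perm_all _ sP) allss.
Qed.

Lemma mem_cls1_dset n t :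
  (1 :: t \in cls (dset n.+1) 1) = perm_eq t (iota 2 n) && succ_free (1 :: t).
Proof. by rewrite mem_cls_dset /= perm_cons. Qed.

Lemma uniq_cls_dset n i : uniq (cls (dset n) i).
Proof. by rewrite !filter_uniq ?permutations_uniq. Qed.

Lemma succ_free_map_pred t : all (fun x => 0 < x) t -> succ_free (map predn t) = succ_free t.
Proof.
move=> t0; rewrite /succ_free sorted_map; apply: (eq_in_sorted (P := fun x => 0 < x)) => //.
by move=> x y /= x0 y0; lia.
Qed.

(* The default [head 0 [::] = 0] is never a successor. *)
Lemma succ_free_cons x t : succ_free (x :: t) = (head 0 t != x.+1) && succ_free t.
Proof. by case: t. Qed.

Lemma map_pred_iota m k : map predn (iota m.+1 k) = iota m k.
Proof. by rewrite iotaS -map_comp map_id. Qed.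

Lemma iota_rcons m k : iota m k.+1 = rcons (iota m k) (m + k).
Proof. by rewrite -addn1 iotaD cats1. Qed.

Lemma rev_iotaS m k : rev (iota m k.+1) = m + k :: rev (iota m k).
Proof. by rewrite iota_rcons rev_rcons. Qed.

Lemma succ_free_rev_iota a k : succ_free (rev (iota a k)).
Proof.
rewrite /succ_free rev_sorted; apply: sub_sorted (iota_ltn_sorted a k) => x y /=; lia.
Qed.

Lemma cls1_dsetP n s :
  s \in cls (dset n.+1) 1 -> exists2 t, s = 1 :: t & perm_eq t (iota 2 n) && succ_free (1 :: t).
Proof.
case: s => [|a t] sA; move: (cls_head sA) => //= a1; subst a.
by exists t; rewrite -?mem_cls1_dset.
Qed.

Lemma inj_in_size_lt (T U : eqType) (f : T -> U) (A : seq T) (B : seq U) y :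
    uniq A -> {in A &, injective f} -> {in A, forall x, f x \in B} ->
  y \in B -> y \notin map f A -> size A < size B.
Proof.
move=> uA injf fAB yB yA; rewrite -(size_map f) -/(size (y :: _)).
apply: uniq_leq_size; first by rewrite /= yA map_inj_in_uniq.
by move=> x; rewrite inE => /predU1P[-> // | /mapP[a aA ->]]; apply: fAB.
Qed.

Definition cyclic_relabel n (s : seq nat) : seq nat := n :: map predn (behead s).

Section ClassOneToClassLast.

Variable n : nat.

Let A := cls (dset n.+1) 1.
Let B := cls (dset n.+1) n.+1.

Lemma perm_iota2_range t : perm_eq t (iota 2 n) -> all (fun x => 1 < x <= n.+1) t.
Proof. by move/perm_all->; apply/allP => x; rewrite mem_iota; lia. Qed.

Lemma cyclic_relabel_cls1 : {in A, forall s, cyclic_relabel n.+1 s \in B}.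
Proof.
move=> _ /cls1_dsetP[t -> /andP[tP tfree]].
have /allP t_range := perm_iota2_range tP.
rewrite mem_cls_dset eqxx andTb; apply/andP; split.
  rewrite iota_rcons add1n /cyclic_relabel /= perm_sym perm_rcons perm_cons.
  by rewrite -map_pred_iota perm_map // perm_sym.
rewrite /cyclic_relabel [behead _]/= succ_free_cons succ_free_map_pred; last first.
  by apply/allP => x /t_range; lia.
rewrite (path_sorted tfree : succ_free t) andbT.
by case: t t_range {tP tfree} => //= c t /(_ c (mem_head c t)); lia.
Qed.

Lemma cyclic_relabel_inj : {in A &, injective (cyclic_relabel n.+1)}.
Proof.
move=> _ _ /cls1_dsetP[t1 -> /andP[t1P _]] /cls1_dsetP[t2 -> /andP[t2P _]] [].
move/(inj_in_map (A := [pred x | 0 < x])) => -> //.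
- by move=> x y; rewrite !inE; lia.
- by rewrite inE; apply: sub_all (perm_iota2_range t1P) => x; rewrite inE; lia.
- by rewrite inE; apply: sub_all (perm_iota2_range t2P) => x; rewrite inE; lia.
Qed.

Lemma notin_cyclic_relabel_cls1 u : nth 0 u 1 = 1 -> u \notin map (cyclic_relabel n.+1) A.
Proof.
move=> u1; apply/mapP => -[_ /cls1_dsetP[t -> /andP[tP tfree]] uE].
move: u1 tfree (perm_iota2_range tP); rewrite {}uE {tP}.
by case: t => //= c t c1 /andP[c2 _] /andP[/andP[c_gt1 _] _]; lia.
Qed.

Lemma rev_iota_cls1 : 1 < n -> 1 :: rev (iota 2 n) \in A.
Proof.
move=> n_gt1; rewrite mem_cls1_dset perm_rev perm_refl succ_free_cons succ_free_rev_iota.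
have [k nk] : exists k, n = k.+1 by exists n.-1; lia.
by rewrite nk rev_iotaS /= andbT; apply/eqP; lia.
Qed.

Lemma rev_iota_clsn : 2 < n -> n.+1 :: 1 :: rev (iota 2 n.-1) \in B.
Proof.
move=> n_gt2; have [k nk] : exists k, n = k.+2 by exists n.-2; lia.
rewrite mem_cls_dset eqxx (iota_rcons 1) add1n perm_sym perm_rcons perm_cons.
have -> : iota 1 n = 1 :: iota 2 n.-1 by rewrite nk.
rewrite perm_cons perm_sym perm_rev perm_refl !succ_free_cons succ_free_rev_iota.
by rewrite nk rev_iotaS /= andbT; apply/eqP; lia.
Qed.

End ClassOneToClassLast.

Theorem proposition4p11 (n : nat) : 3 < n -> ~ equidistributed n (dset n).
Proof.
case: n => [//|m m_gt2 equi].
set A := cls (dset m.+1) 1; set B := cls (dset m.+1) m.+1.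
have A_lt_B : size A < size B.
  apply: (inj_in_size_lt (uniq_cls_dset _ _) (@cyclic_relabel_inj m)).
  - exact: cyclic_relabel_cls1.
  - exact: rev_iota_clsn.
  - exact: notin_cyclic_relabel_cls1.
have A_ne0 : size A != 0.
  by apply: contraTneq (rev_iota_cls1 (ltnW m_gt2)); rewrite -/A => /size0nil ->.
have B_ne0 : size B != 0 by rewrite -lt0n (leq_ltn_trans _ A_lt_B).
have A_eq_B : size A = size B by apply: equi; rewrite ?leqnn.
by rewrite A_eq_B ltnn in A_lt_B.
Qed.
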